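(* Under the standing setting and assumptions (A1)–(A3) described in the context, assume $\mathrm{int}\,\mathcal X_+\cap\mathcal M\neq\emptyset$. Then for every $\varepsilon>0$ the map $\mathcal R_\varepsilon$ is lower semicontinuous at every point of $\mathcal X$.
   Context: Let $\mathcal X$ be a Hausdorff, first countable, locally convex topological vector space over $\mathbb R$, partially ordered by a partial order $\geq$ with positive cone $\mathcal X_+=\{X\in\mathcal X: X\geq 0\}$. Let $\mathcal M\subset\mathcal X$ be a vector subspace with $1<\dim\mathcal M<\infty$, carrying the relative topology, and let $\pi:\mathcal M\to\mathbb R$ be linear. Standing assumptions: (A1) there is $U\in\mathcal M\cap\mathcal X_+$ with $\pi(U)=1$; (A2) $\mathcal A\subsetneq\mathcal X$ is closed, contains $0$, and satisfies $\mathcal A+\mathcal X_+\subset\mathcal A$; (A3) the map $\rho(X)=\inf\{\pi(Z): Z\in\mathcal M,\ X+Z\in\mathcal A\}$ is finitely valued and continuous on $\mathcal X$. For $\varepsilon>0$, $\mathcal R_\varepsilon(X)=\{Z\in\mathcal M: X+Z\in\mathcal A,\ \pi(Z)<\rho(X)+\varepsilon\}$. $\mathrm{int}$ denotes interior in $\mathcal X$. A set-valued map $\mathcal S:\mathcal X\rightrightarrows\mathcal M$ is lower semicontinuous at $X$ if for every open $\mathcal U\subset\mathcal M$ with $\mathcal S(X)\cap\mathcal U\neq\emptyset$ there is an open neighborhood $\mathcal U_X$ of $X$ with $\mathcal S(Y)\cap\mathcal U\neq\emptyset$ for all $Y\in\mathcal U_X$. *)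

From HB Require Import structures.
From mathcomp Require Import all_boot all_order all_algebra.
From mathcomp Require Import all_classical all_reals all_analysis.
Set Implicit Arguments. Unset Strict Implicit. Unset Printing Implicit Defensive.
Import Order.TTheory GRing.Theory Num.Theory.
Local Open Scope classical_set_scope.
Local Open Scope ring_scope.

Section Defs.
Context {R : realType} {E : tvsType R}.

Definition first_countable : Prop :=
  forall x : E, exists B : nat -> set E,
    (forall n, open (B n) /\ B n x) /\
    (forall U, nbhs x U -> exists n, B n `<=` U).

Definition vector_partial_order (le : E -> E -> Prop) : Prop :=
  [/\ (forall x, le x x),
      (forall x y, le x y -> le y x -> x = y),
      (forall x y z, le x y -> le y z -> le x z),
      (forall x y z, le x y -> le (x + z) (y + z)) &
      (forall (a : R) x y, 0 <= a -> le x y -> le (a *: x) (a *: y))].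

Definition pos_cone (le : E -> E -> Prop) : set E := [set x | le 0 x].

Definition subspace_of_dim (M : set E) (n : nat) : Prop :=
  exists b : 'I_n -> E,
    (forall c : 'I_n -> R, \sum_(i < n) c i *: b i = 0 -> forall i, c i = 0) /\
    M = [set x | exists c : 'I_n -> R, x = \sum_(i < n) c i *: b i].

(* pi : M -> R linear (only its values on M matter) *)
Definition linear_on (M : set E) (pi : E -> R) : Prop :=
  (forall x y, M x -> M y -> pi (x + y) = pi x + pi y) /\
  (forall (a : R) x, M x -> pi (a *: x) = a * pi x).

Definition rho_e (M : set E) (pi : E -> R) (A : set E) (X : E) : \bar R :=
  ereal_inf [set (pi Z)%:E | Z in [set Z | M Z /\ A (X + Z)]].

Definition R_eps (M : set E) (pi : E -> R) (A : set E) (eps : R) (X : E) : set E :=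
  [set Z | [/\ M Z, A (X + Z) & ((pi Z)%:E < rho_e M pi A X + eps%:E)%E]].

Definition lsc_at (M : set E) (S : E -> set E) (X : E) : Prop :=
  forall U : set E, (exists V : set E, open V /\ U = V `&` M) ->
    S X `&` U !=set0 ->
    exists W : set E, [/\ open W, W X & forall Y, W Y -> S Y `&` U !=set0].

End Defs.

From HB Require Import structures.
From mathcomp Require Import all_boot all_order all_algebra.
From mathcomp Require Import all_classical all_reals all_analysis.
From mathcomp Require Import lra.
Import Order.TTheory GRing.Theory Num.Theory.
Local Open Scope classical_set_scope.
Local Open Scope ring_scope.

(* Fix [Z] in [R_eps X] inside an open set [V] and [P] in [M] interior to the
   positive cone.  Replacing [Z] by [Z + d P] for a small [d > 0] keeps it in [V]
   and keeps the slack [rho X + eps - pi Z] positive.  For [Y] near [X] the vector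
   [P + (Y - X) / d] is still positive, so
   [Y + Z + d P = (X + Z) + d (P + (Y - X) / d)] stays in the upward closed set [A];
   continuity of [rho] then gives [pi (Z + d P) < rho Y + eps]. *)

Section tvs_cvg.
Context {R : numDomainType} {E : tvsType R}.

Lemma tvs_cvgD {T} (F : set_system T) {FF : Filter F} (f g : T -> E) (a b : E) :
  f @ F --> a -> g @ F --> b -> (fun x => f x + g x) @ F --> a + b.
Proof.
move=> fa gb; apply: (@continuous2_cvg _ _ _ _ _ _ f g (fun u v => u + v)) => //.
exact: (@add_continuous _ (a, b)).
Qed.

Lemma tvs_cvgZ {T} (F : set_system T) {FF : Filter F} (s : T -> R^o) (f : T -> E)
    (k : R^o) (a : E) :
  s @ F --> k -> f @ F --> a -> (fun x => s x *: f x) @ F --> k *: a.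
Proof.
move=> sk fa; apply: (@continuous2_cvg _ _ _ _ _ _ s f (fun u v => u *: v)) => //.
exact: (@scale_continuous _ _ (k, a)).
Qed.

Lemma near_affine_shift (C : set E) (P X : E) (t : R) :
  nbhs P C -> \forall Y \near X, C (P + t *: (Y - X)).
Proof.
have : (fun Y => P + t *: (Y - X)) @ X --> P + t *: (X - X).
  apply: tvs_cvgD; first exact: cvg_cst.
  apply: (@tvs_cvgZ _ _ _ (fun=> t : R^o)); first exact: cvg_cst.
  apply: tvs_cvgD; [exact: cvg_id | exact: cvg_cst].
by rewrite subrr scaler0 addr0; apply.
Qed.

End tvs_cvg.

Lemma exists_small_shift {R : realType} {E : tvsType R} (V : set E) (Z P : E) (k c : R) :
  nbhs Z V -> 0 < c -> exists d : R, [/\ 0 < d, V (Z + d *: P) & d * k < c].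
Proof.
move=> VZ c0.
have ZP : (fun d : R^o => Z + d *: P) @ (0 : R^o) --> Z.
  rewrite -[X in _ --> X]addr0 -[X in _ --> (_ + X)](scale0r P).
  apply: tvs_cvgD; first exact: cvg_cst.
  apply: tvs_cvgZ; [exact: cvg_id | exact: cvg_cst].
have dk : (fun d : R => d * k) @ 0 --> 0.
  by rewrite -[X in _ --> X](mul0r k); exact: cvgMr_tmp cvg_id.
apply: (@filter_ex _ (0 : R)^'+); near=> d; split.
- by near: d; exact: nbhs_right_gt.
- near: d; apply: cvg_within; exact: ZP.
- near: d; apply: cvg_within; exact: cvgr_lt dk _ c0.
Unshelve. all: by end_near. Qed.

Section acceptance.
Context {R : realType} {E : tvsType R}.

Lemma subspace_of_dimD (M : set E) n x y :
  subspace_of_dim M n -> M x -> M y -> M (x + y).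
Proof.
move=> [b [_ ->]] [c ->] [c' ->]; exists (fun i => c i + c' i).
by rewrite -big_split /=; apply: eq_bigr => i _; rewrite scalerDl.
Qed.

Lemma subspace_of_dimZ (M : set E) n (a : R) x :
  subspace_of_dim M n -> M x -> M (a *: x).
Proof.
move=> [b [_ ->]] [c ->]; exists (fun i => a * c i).
by rewrite scaler_sumr; apply: eq_bigr => i _; rewrite scalerA.
Qed.

Lemma pos_coneZ (le : E -> E -> Prop) (a : R) x :
  vector_partial_order le -> 0 <= a -> pos_cone le x -> pos_cone le (a *: x).
Proof. by case=> _ _ _ _ leZ a0 /(leZ _ _ _ a0); rewrite /pos_cone scaler0. Qed.

Lemma lsc_at_near (M : set E) (S : E -> set E) X :
  (forall U, (exists V, open V /\ U = V `&` M) -> S X `&` U !=set0 ->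
     \forall Y \near X, S Y `&` U !=set0) ->
  lsc_at M S X.
Proof.
move=> SU U oU /(SU _ oU) SUX.
exists (interior [set Y | S Y `&` U !=set0]); split => //.
- exact: open_interior.
- exact: interior_subset.
Qed.

Variables (le : E -> E -> Prop) (M : set E) (n : nat) (pi : E -> R) (A : set E) (P : E).
Hypotheses (le_order : vector_partial_order le) (M_dim : subspace_of_dim M n)
  (pi_linear : linear_on M pi)
  (A_upward : forall a p, A a -> pos_cone le p -> A (a + p))
  (rho_fin : forall X, rho_e M pi A X \is a fin_num)
  (rho_cont : continuous (fun X : E => (fine (rho_e M pi A X) : R^o)))
  (MP : M P) (P_interior : interior (pos_cone le) P).

Lemma R_eps_lsc_at (eps : R) : 0 < eps -> forall X, lsc_at M (R_eps M pi A eps) X.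
Proof.
move=> eps_gt0 X; apply: lsc_at_near => _ [V [oV ->]] [Z [[MZ AXZ ltZ] [VZ _]]].
set r := fun Y => fine (rho_e M pi A Y).
have rhoE Y : rho_e M pi A Y = (r Y)%:E by rewrite fineK ?rho_fin.
move: ltZ; rewrite rhoE -EFinD lte_fin => ltZ.
pose eta := r X + eps - pi Z.
have eta2_gt0 : 0 < eta / 2 by rewrite divr_gt0 // subr_gt0.
have [d [d_gt0 Vd dP]] :=
  exists_small_shift _ _ P (pi P) _ (open_nbhs_nbhs (conj oV VZ)) eta2_gt0.
have rhoY : \forall Y \near X, r X - eta / 2 < r Y.
  have := @cvgr_gt _ _ _ _ _ _ (rho_cont X) (r X - eta / 2).
  by rewrite gtrBl => /(_ _ eta2_gt0).
have coneY := near_affine_shift _ _ X d^-1 P_interior.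
have MZd : M (Z + d *: P).
  by apply: subspace_of_dimD M_dim MZ _; exact: subspace_of_dimZ M_dim MP.
near=> Y; exists (Z + d *: P); split; last by split.
split => //.
- have -> : Y + (Z + d *: P) = X + Z + d *: (P + d^-1 *: (Y - X)).
    rewrite scalerDr scalerA mulfV ?gt_eqF // scale1r.
    have XZY : X + Z + (Y - X) = Y + Z by rewrite addrC addrA subrK.
    by rewrite [d *: P + _]addrC [RHS]addrA XZY addrA.
  apply: A_upward => //; apply: pos_coneZ; [by [] | exact: ltW |].
  by near: Y.
- have [piD piZ] := pi_linear.
  rewrite rhoE -EFinD lte_fin piD ?piZ //; last exact: subspace_of_dimZ M_dim MP.
  have : r X - eta / 2 < r Y by near: Y.
  move: dP; rewrite /eta; lra.
Unshelve. all: by end_near. Qed.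

End acceptance.

Theorem mainTheorem19 (R : realType) (E : tvsType R)
  (le : E -> E -> Prop) (M : set E) (n : nat) (pi : E -> R) (A : set E) :
  hausdorff_space E ->
  first_countable (E := E) ->
  vector_partial_order le ->
  subspace_of_dim M n -> (1 < n)%N ->
  linear_on M pi ->
  (* (A1) *)
  (exists U, [/\ M U, pos_cone le U & pi U = 1]) ->
  (* (A2) *)
  closed A -> A 0 -> A != setT ->
  (forall a p, A a -> pos_cone le p -> A (a + p)) ->
  (* (A3) *)
  (forall X, rho_e M pi A X \is a fin_num) ->
  continuous (fun X : E => (fine (rho_e M pi A X) : R^o)) ->
  (* int X_+ meets M *)
  (exists U, M U /\ interior (pos_cone le) U) ->
  forall eps : R, 0 < eps ->
  forall X : E, lsc_at M (R_eps M pi A eps) X.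
Proof.
move=> _ _ le_order M_dim _ pi_linear _ _ _ _ A_upward rho_fin rho_cont
  [P [MP P_interior]].
exact: (R_eps_lsc_at le M n pi A P le_order M_dim pi_linear A_upward rho_fin
  rho_cont MP P_interior).
Qed.
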